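(* For every integer $n\ge1$, the number of walks $0=y_0,y_1,\dots,y_n=1$ with $y_i-y_{i-1}\in\{-2,-1,+1,+2\}$ for all $i$ and $y_i\ge1$ for all $1\le i\le n$ (basketball walks of length $n$ from the origin to altitude $1$ never returning to the $x$-axis) equals $$\frac1n\sum_{k=1}^{n}(-1)^{k+1}\binom{2k-2}{k-1}\binom{2n}{n-k}=\frac1n\sum_{i=0}^{n}\binom ni\binom{n}{2n+1-3i}.$$
   Context: Binomial coefficients $\binom ab$ with $b<0$ or $b>a\ge0$ are $0$. *)

From HB Require Import structures.
From mathcomp Require Import all_boot all_order all_algebra.
Set Implicit Arguments. Unset Strict Implicit. Unset Printing Implicit Defensive.
Import Order.TTheory GRing.Theory Num.Theory.
Local Open Scope ring_scope.

Definition bstep (c : 'I_4) : int := [:: -2; -1; 1; 2]`_c.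

(* A walk of length n is encoded by its sequence of steps s : 'I_n -> 'I_4;
   height s i = y_i = sum of the first i steps (y_0 = 0). *)
Definition height (n : nat) (s : {ffun 'I_n -> 'I_4}) (i : nat) : int :=
  \sum_(j < n | (j < i)%N) bstep (s j).

Definition bwalks_to1 (n : nat) : {set {ffun 'I_n -> 'I_4}} :=
  [set s | [forall i : 'I_n, 1 <= height s i.+1] && (height s n == 1)].

Definition binz (a : nat) (b : int) : nat :=
  match b with Posz m => 'C(a, m) | Negz _ => 0%N end.

(* Cycle lemma: among the n cyclic rotations of a step sequence of total
   displacement 1, exactly one has all its partial sums positive.  Hence n times
   the number of walks is the number of unconstrained walks of length n ending at
   1, i.e. the coefficient of x^(2n+1) in (1 + x + x^3 + x^4)^n, and expanding
   (1 + x^3)^n (1 + x)^n gives the second sum.  The first sum is the coefficient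
   of x^(n-1) in (1 + x)^(2n) (1 + 4x)^(-1/2).  By creative telescoping both
   coefficient sequences satisfy the same third-order recurrence with polynomial
   coefficients: applied to either sequence, the recurrence is the coefficient of
   x^m in x Q' - m Q for an explicit polynomial Q, hence vanishes.  The two
   sequences agree for n = 1, 2, 3. *)

From HB Require Import structures.
From mathcomp Require Import all_boot all_order all_algebra.
From mathcomp Require Import ring zify.
Import Order.TTheory GRing.Theory Num.Theory.
Local Open Scope ring_scope.

Definition psum (w : nat -> int) (m : nat) : int := \sum_(0 <= j < m) w j.

Lemma psumS w m : psum w m.+1 = psum w m + w m.
Proof. by rewrite /psum big_nat_recr. Qed.

Definition positive_rotation (w : nat -> int) (n r : nat) : bool :=
  [forall i : 'I_n, psum w r < psum w (r + i.+1)].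

Section CycleLemma.

Context {n : nat} {w : nat -> int}.
Hypotheses (w_periodic : forall m, w (m + n) = w m) (psum_n : psum w n = 1).

Lemma psum_addn m : psum w (m + n) = psum w m + psum w n.
Proof.
elim: m => [|m IHm]; first by rewrite add0n {2}/psum big_geq // add0r.
by rewrite addSn !psumS IHm w_periodic addrAC.
Qed.

Lemma positive_rotation_uniq (r r' : 'I_n) :
  positive_rotation w n r -> positive_rotation w n r' -> r = r'.
Proof.
wlog lt_rr' : r r' / (r < r')%N.
  move=> W pos_r pos_r'; case: (ltngtP r r') => [lt_rr'|lt_r'r|/val_inj //].
  - exact: W.
  - exact/esym/W.
move=> /forallP pos_r /forallP pos_r'.
have i1 : ((r' - r).-1 < n)%N by have := ltn_ord r'; lia.
have i2 : ((r + n - r').-1 < n)%N by have := ltn_ord r; lia.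
have lt_r_r' : psum w r < psum w r'.
  by have := pos_r (Ordinal i1); rewrite /= prednK ?subn_gt0 // subnKC // ltnW.
have lt_r'_rn : psum w r' < psum w r + 1.
  have := pos_r' (Ordinal i2); rewrite /= prednK; last by have := ltn_ord r'; lia.
  by rewrite subnKC -?psum_n -?psum_addn //; have := ltn_ord r'; lia.
lia.
Qed.

Lemma positive_rotation_exists :
  (0 < n)%N -> exists r : 'I_n, positive_rotation w n r.
Proof.
move=> n_gt0; pose i0 := Ordinal n_gt0.
(* Start at the last index where the partial sums reach their minimum. *)
case: (@arg_minP _ _ 'I_n i0 xpredT (psum w \o val) isT) => r0 _ min_r0.
case: (@arg_maxnP _ r0 (fun r => psum w r == psum w r0) val (eqxx _)).
move=> r /eqP r_min max_r.
exists r; apply/forallP => i; case: (ltnP (r + i.+1) n) => [lt_ri|le_nri].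
- have /= := min_r0 (Ordinal lt_ri) isT; rewrite -r_min le_eqVlt => /orP[/eqP eq_r|//].
  by have := max_r (Ordinal lt_ri); rewrite /= -eq_r r_min eqxx => /(_ isT); lia.
- have lt_j : (r + i.+1 - n < n)%N by have := ltn_ord r; have := ltn_ord i; lia.
  rewrite -(subnK le_nri) psum_addn psum_n.
  have /= := min_r0 (Ordinal lt_j) isT; rewrite -r_min; lia.
Qed.

End CycleLemma.

Section Rotation.

Context {n : nat} (n_gt0 : (0 < n)%N).

Definition ord_mod (m : nat) : 'I_n := Ordinal (ltn_pmod m n_gt0).

Definition periodic_steps (s : {ffun 'I_n -> 'I_4}) (m : nat) : int :=
  bstep (s (ord_mod m)).

Definition rotate (s : {ffun 'I_n -> 'I_4}) (r : nat) : {ffun 'I_n -> 'I_4} :=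
  [ffun j : 'I_n => s (ord_mod (j + r))].

Lemma periodic_steps_addn s m : periodic_steps s (m + n) = periodic_steps s m.
Proof. by congr (bstep (s _)); apply: val_inj; rewrite /= modnDr. Qed.

Lemma height_psum s i : (i <= n)%N -> height s i = psum (periodic_steps s) i.
Proof.
move=> le_in; rewrite /height /psum big_mkord (big_ord_widen n _ le_in).
apply: eq_bigr => j _; congr (bstep (s _)); apply: val_inj.
by rewrite /= modn_small.
Qed.

Lemma psum_rotate s r i :
  psum (periodic_steps (rotate s r)) i =
  psum (periodic_steps s) (r + i) - psum (periodic_steps s) r.
Proof.
rewrite /psum [in RHS](@big_cat_nat _ _ _ r 0 (r + i)) ?leq_addr //= addrC addrK.
rewrite (big_addn 0 (r + i) r) addKn; apply: eq_bigr => j _.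
rewrite /periodic_steps /rotate ffunE; congr (bstep (s _)); apply: val_inj.
by rewrite /= modnDml addnC.
Qed.

Lemma rotate_in_bwalks s r :
  (rotate s r \in bwalks_to1 n) =
  positive_rotation (periodic_steps s) n r && (height s n == 1).
Proof.
rewrite inE !height_psum // psum_rotate.
rewrite (psum_addn (periodic_steps_addn s)) addrAC subrr add0r; congr andb.
by apply: eq_forallb => i; rewrite height_psum // psum_rotate; apply/idP/idP; lia.
Qed.

Lemma rotate_inj (r : 'I_n) : injective (rotate ^~ r).
Proof.
move=> s t eq_st; apply/ffunP => j.
have := congr1 (fun f : {ffun 'I_n -> 'I_4} => f (ord_mod (j + (n - r)))) eq_st.
rewrite !ffunE; suff -> : ord_mod (ord_mod (j + (n - r)) + r) = j by [].
apply: val_inj; rewrite /= modnDml -addnA subnK ?(ltnW (ltn_ord r)) //.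
by rewrite modnDr modn_small.
Qed.

Lemma card_rotations_in_bwalks s :
  #|[set r : 'I_n | rotate s r \in bwalks_to1 n]| = (height s n == 1).
Proof.
have [/eqP height1|height_neq1] := boolP (height s n == 1); last first.
  apply/eqP; rewrite cards_eq0; apply/eqP/setP => r.
  by rewrite in_set in_set0 rotate_in_bwalks (negbTE height_neq1) andbF.
have psum_n : psum (periodic_steps s) n = 1 by rewrite -height_psum.
have [r0 pos_r0] := positive_rotation_exists (periodic_steps_addn s) psum_n n_gt0.
rewrite (_ : [set r | _] = [set r0]) ?cards1 //; apply/setP => r.
rewrite in_set in_set1 rotate_in_bwalks height1 eqxx andbT.
apply/idP/eqP => [pos_r|->//].
exact: positive_rotation_uniq (periodic_steps_addn s) psum_n _ _ pos_r pos_r0.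
Qed.

Lemma card_bwalks_to1 :
  (#|bwalks_to1 n| * n)%N = #|[set s : {ffun 'I_n -> 'I_4} | height s n == 1]|.
Proof.
have card_setE (T : finType) (P : pred T) : #|[set x | P x]| = (\sum_x P x)%N.
  by rewrite -sum1_card big_mkcond; apply: eq_bigr => x _; rewrite inE; case: (P x).
transitivity (\sum_(r : 'I_n) #|[set s | rotate s r \in bwalks_to1 n]|)%N.
  rewrite mulnC -[X in (X * _)%N]card_ord -sum_nat_const; apply: eq_bigr => r _.
  by rewrite -[LHS](card_preimset _ (rotate_inj r)); apply: eq_card => s; rewrite !inE.
under eq_bigr do rewrite card_setE.
rewrite exchange_big card_setE; apply: eq_bigr => s _.
by rewrite -card_rotations_in_bwalks card_setE.
Qed.

End Rotation.

Lemma coef_sum_ffun_weight (R : nzSemiRingType) (T : finType) (g : T -> nat) (n m : nat) :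
  ((\sum_(c : T) 'X^(g c) : {poly R}) ^+ n)`_m =
  #|[set s : {ffun 'I_n -> T} | (\sum_j g (s j))%N == m]|%:R.
Proof.
rewrite -[n in _ ^+ n]card_ord -prodr_const bigA_distr_bigA coef_sum.
rewrite -sum1_card natr_sum [RHS]big_mkcond /=; apply: eq_bigr => s _.
by rewrite prodrXr coefXn inE eq_sym; case: eqP.
Qed.

Lemma coef_1DX_exp (R : nzSemiRingType) (m t : nat) :
  ((1 + 'X : {poly R}) ^+ m)`_t = 'C(m, t)%:R.
Proof.
rewrite addrC exprD1n coef_sum.
under eq_bigr do rewrite coefMn coefXn eq_sym.
have [le_tm|lt_mt] := leqP t m; last first.
  rewrite bin_small // big1 // => i _.
  by case: eqP => [eq_ti|]; rewrite ?mul0rn //; have := ltn_ord i; lia.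
rewrite (bigD1 (Ordinal (le_tm : t < m.+1)%N)) //= eqxx big1 ?addr0 // => i ne_it.
by case: eqP => [eq_it|]; rewrite ?mul0rn //; case/eqP: ne_it; apply: val_inj.
Qed.

Definition shifted_step (c : 'I_4) : nat := nth 0%N [:: 0; 1; 3; 4]%N c.

Lemma bstepE c : bstep c = (shifted_step c)%:Z - 2.
Proof. by case: c => -[|[|[|[|//]]]]. Qed.

Definition step_poly : {poly rat} := 1 + 'X + 'X^3 + 'X^4.

Lemma step_polyE : step_poly = \sum_(c : 'I_4) 'X^(shifted_step c).
Proof. by rewrite !big_ord_recr big_ord0 /= add0r expr0 expr1. Qed.

Definition free_walks (n : nat) : rat := (step_poly ^+ n)`_(2 * n + 1).

Lemma card_height1 n :
  #|[set s : {ffun 'I_n -> 'I_4} | height s n == 1]|%:R = free_walks n.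
Proof.
rewrite /free_walks step_polyE coef_sum_ffun_weight; congr _%:R.
apply: eq_card => s; rewrite !inE.
have -> : height s n = (\sum_j shifted_step (s j))%N%:Z - (2 * n)%:Z.
  rewrite (_ : height s n = \sum_j bstep (s j)); last first.
    by apply: eq_bigl => j; rewrite ltn_ord.
  transitivity (\sum_j ((shifted_step (s j))%:Z - 2)).
    by apply: eq_bigr => j _; rewrite bstepE.
  rewrite sumrB sumr_const card_ord -(big_morph _ PoszD (erefl 0%:Z)) -mulr_natr; lia.
by move: (\sum_j _)%N => k; apply/eqP/eqP => ?; lia.
Qed.

Definition binom_prod_sum (n : nat) : rat :=
  \sum_(0 <= i < n.+1) 'C(n, i)%:R * (binz n (2 * n%:Z + 1 - 3 * i%:Z))%:R.

Lemma free_walks_binom_prod_sum n : free_walks n = binom_prod_sum n.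
Proof.
rewrite /free_walks /binom_prod_sum.
have -> : step_poly ^+ n = \sum_(i < n.+1) 'X^(3 * i) * (1 + 'X) ^+ n *+ 'C(n, i).
  rewrite (_ : step_poly = ('X^3 + 1) * (1 + 'X)); last by rewrite /step_poly; ring.
  rewrite exprMn exprD1n mulr_suml; apply: eq_bigr => i _.
  by rewrite -exprM mulrnAl.
rewrite coef_sum big_mkord; apply: eq_bigr => i _.
rewrite coefMn coefXnM coef_1DX_exp mulr_natl; case: ltnP => [lt_n3i|le_3in].
  by rewrite (_ : 2 * n%:Z + 1 - 3 * i%:Z = Negz (3 * i - 2 * n - 2)) ?mul0rn //; lia.
by rewrite (_ : 2 * n%:Z + 1 - 3 * i%:Z = (2 * n + 1 - 3 * i)%N) //; lia.
Qed.

Section LinearRecurrence.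

Context {R : idomainType} (d : nat) (c : nat -> nat -> R).

Definition rec_lhs (a : nat -> R) (n : nat) : R := \sum_(i < d.+1) c i n * a (n + i)%N.

Lemma rec_lhs_uniq (a b : nat -> R) :
  (forall n, (0 < n)%N -> c d n != 0) ->
  (forall n, (0 < n)%N -> rec_lhs a n = 0) -> (forall n, (0 < n)%N -> rec_lhs b n = 0) ->
  (forall n, (0 < n <= d)%N -> a n = b n) -> forall n, (0 < n)%N -> a n = b n.
Proof.
move=> cd_neq0 rec_a rec_b init; elim/ltn_ind => m IHm m_gt0.
have [le_md|lt_dm] := leqP m d; first by apply: init; rewrite m_gt0.
have n_gt0 : (0 < m - d)%N by rewrite subn_gt0.
have := rec_a _ n_gt0; have := rec_b _ n_gt0.
rewrite /rec_lhs !big_ord_recr /= subnK ?(ltnW lt_dm) //.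
have -> : \sum_(i < d) c i (m - d)%N * a (m - d + i)%N =
          \sum_(i < d) c i (m - d)%N * b (m - d + i)%N.
  by apply: eq_bigr => i _; rewrite IHm //; have := ltn_ord i; lia.
move=> /eqP; rewrite addr_eq0 => /eqP Sb /eqP; rewrite addr_eq0 => /eqP Sa.
by apply: (mulfI (cd_neq0 _ n_gt0)); apply: oppr_inj; rewrite -Sa -Sb.
Qed.

End LinearRecurrence.

Lemma coef_telescope {R : nzRingType} (Q : {poly R}) (m : nat) : ('X * Q^`() - Q *+ m)`_m = 0.
Proof.
rewrite coefB coefXM coefMn; case: m => [|m] /=; first by rewrite mulr0n subrr.
by rewrite coef_deriv subrr.
Qed.

Lemma coef_pow_telescope {R : comNzRingType} {P L C : {poly R}} {n m : nat} :
    (0 < n)%N ->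
    P * L = n%:R * 'X * P^`() * C + P * ('X * C^`() - m%:R * C) ->
  (P ^+ n * L)`_m = 0.
Proof.
case: n => // k _ cert.
suff -> : P ^+ k.+1 * L = 'X * (P ^+ k.+1 * C)^`() - P ^+ k.+1 * C *+ m.
  exact: coef_telescope.
rewrite [in LHS]exprSr -mulrA cert derivM deriv_exp /= exprS.
move: (P ^+ k) => Pk; ring.
Qed.

(* The recurrence and the certificates free_walks_cert, alt_binom_cert were found
   by creative telescoping. *)
Definition walk_rec_coef (i n : nat) : rat :=
  let N := n%:R in
  [:: -162 * (N + 1) * (N + 2) * (2 * N + 1) * (5 * N + 13);
      -9 * (N + 2) * (115 * N ^+ 3 + 689 * N ^+ 2 + 1332 * N + 840);
      4 * (2 * N + 5) * (5 * N ^+ 3 - 12 * N ^+ 2 - 113 * N - 126);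
      4 * (N + 2) * (2 * N + 5) * (2 * N + 7) * (5 * N + 8)]`_i.

Definition free_walks_cert_coef (k n : nat) : rat :=
  let N := n%:R in
  [:: - 320 - 488 * N - 244 * N ^+ 2 - 40 * N ^+ 3;
      - 1120 - 1708 * N - 854 * N ^+ 2 - 140 * N ^+ 3;
      - 840 - 1604 * N - 984 * N ^+ 2 - 190 * N ^+ 3;
      - 980 - 2182 * N - 1483 * N ^+ 2 - 305 * N ^+ 3;
      - 840 - 1440 * N - 888 * N ^+ 2 - 180 * N ^+ 3;
      - 426 * N - 540 * N ^+ 2 - 150 * N ^+ 3;
      852 + 1314 * N + 390 * N ^+ 2;
      1680 + 2712 * N + 1200 * N ^+ 2 + 150 * N ^+ 3;
      2520 + 3492 * N + 1458 * N ^+ 2 + 180 * N ^+ 3;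
      1960 + 3640 * N + 1913 * N ^+ 2 + 305 * N ^+ 3;
      1400 + 2444 * N + 1234 * N ^+ 2 + 190 * N ^+ 3;
      1680 + 2314 * N + 1014 * N ^+ 2 + 140 * N ^+ 3;
      448 + 632 * N + 284 * N ^+ 2 + 40 * N ^+ 3]`_k.

Definition free_walks_cert (n : nat) : {poly rat} :=
  \sum_(k < 13) (free_walks_cert_coef k n)%:P * 'X^k.

Lemma free_walks_certP n :
  step_poly * \sum_(i < 4) (walk_rec_coef i n)%:P * 'X^(6 - 2 * i) * step_poly ^+ i =
  n%:R * 'X * step_poly^`() * free_walks_cert n +
  step_poly * ('X * (free_walks_cert n)^`() - (2 * n + 7)%:R * free_walks_cert n).
Proof.
rewrite /free_walks_cert /step_poly !big_ord_recr !big_ord0 /=.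
rewrite !(derivD, deriv_mulC, derivXn, derivX, derivC) /=.
by rewrite /free_walks_cert_coef /walk_rec_coef /=; ring.
Qed.

Lemma free_walks_rec n : (0 < n)%N -> rec_lhs 3 walk_rec_coef free_walks n = 0.
Proof.
move=> n_gt0; rewrite -(coef_pow_telescope n_gt0 (free_walks_certP n)).
rewrite mulr_sumr coef_sum; apply: eq_bigr => i _.
have -> : step_poly ^+ n * ((walk_rec_coef i n)%:P * 'X^(6 - 2 * i) * step_poly ^+ i) =
          (walk_rec_coef i n)%:P * ('X^(6 - 2 * i) * step_poly ^+ (n + i)).
  by rewrite exprD; move: (step_poly ^+ n) (step_poly ^+ i) ('X^(6 - 2 * i)) => ? ? ?; ring.
have lt_i4 := ltn_ord i.
rewrite coefCM coefXnM ifN; last lia.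
by rewrite /free_walks (_ : (2 * n + 7 - (6 - 2 * i) = 2 * (n + i) + 1)%N) //; lia.
Qed.

Lemma mul_central_binS i : (i.+1 * 'C(2 * i.+1, i.+1) = 2 * (2 * i + 1) * 'C(2 * i, i))%N.
Proof.
have diag : (2 * i.+1 * 'C(2 * i + 1, i) = i.+1 * 'C(2 * i.+1, i.+1))%N.
  by move: (mul_bin_diag (2 * i.+1) i); rewrite (_ : (2 * i.+1).-1 = 2 * i + 1)%N //; lia.
have down : ((2 * i).+1 * 'C(2 * i, i) = i.+1 * 'C(2 * i + 1, i))%N.
  by move: (mul_bin_down (2 * i).+1 i); rewrite (_ : (2 * i).+1 - i = i.+1)%N ?addn1 //; lia.
apply/eqP; rewrite -(eqn_pmul2l (ltn0Sn i)) -diag; apply/eqP; nia.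
Qed.

(* (1 + 4x)^(-1/2) = \sum_i invsqrt_coef i x^i.  We only use its truncations,
   which satisfy (1 + 4x) f' + 2 f = 0 up to degree M - 2. *)
Definition invsqrt_coef (i : nat) : rat := (-1) ^+ i * 'C(2 * i, i)%:R.

Definition invsqrt_trunc (M : nat) : {poly rat} := \poly_(i < M) invsqrt_coef i.

Lemma invsqrt_coefS i : invsqrt_coef i.+1 *+ i.+1 = - invsqrt_coef i *+ (4 * i + 2).
Proof.
rewrite /invsqrt_coef -!mulrnAr -!mulrnA mulnC mul_central_binS.
by rewrite (_ : (4 * i + 2) = 2 * (2 * i + 1))%N 1?mulnC ?exprS; [ring | lia].
Qed.

Lemma coef_invsqrt_trunc_ode M i : (i.+1 < M)%N ->
  ((1 + 4 * 'X) * (invsqrt_trunc M)^`() + 2 * invsqrt_trunc M)`_i = 0.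
Proof.
move=> lt_iM; have lt_i'M : (i < M)%N by apply: ltn_trans lt_iM.
rewrite mulrDl mul1r -mulrA !mulr_natl coefD coefD !coefMn coefXM.
rewrite !coef_deriv !coef_poly lt_iM lt_i'M.
case: i lt_iM lt_i'M => [|i] lt_iM lt_i'M /=; first by rewrite invsqrt_coefS; ring.
by rewrite lt_i'M invsqrt_coefS; ring.
Qed.

Definition alt_binom_sum (n : nat) : rat :=
  \sum_(1 <= k < n.+1) (-1) ^+ k.+1 * 'C(2 * k - 2, k - 1)%:R * 'C(2 * n, n - k)%:R.

Lemma alt_binom_sum_coef n M : (0 < n)%N -> (n <= M)%N ->
  alt_binom_sum n = (((1 + 'X) ^+ 2) ^+ n * invsqrt_trunc M)`_n.-1.
Proof.
case: n => [//|n] _ le_nM; rewrite -exprM mulrC coefM /alt_binom_sum big_add1 big_mkord.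
apply: eq_bigr => j _.
rewrite coef_poly (leq_trans (ltn_ord j) le_nM) coef_1DX_exp /invsqrt_coef.
rewrite (_ : (2 * j.+1 - 2 = 2 * j)%N); last lia.
by rewrite subn1 /= subSS !exprS !mulN1r opprK.
Qed.

Definition alt_binom_cert_coef (k n : nat) : rat :=
  let N := n%:R in
  [:: - 1120 - 1468 * N - 608 * N ^+ 2 - 80 * N ^+ 3;
      - 4200 - 5820 * N - 2556 * N ^+ 2 - 360 * N ^+ 3;
      - 2912 - 3350 * N - 1081 * N ^+ 2 - 85 * N ^+ 3;
      1052 + 2486 * N + 1684 * N ^+ 2 + 340 * N ^+ 3;
      1044 + 1728 * N + 939 * N ^+ 2 + 165 * N ^+ 3;
      160 + 244 * N + 122 * N ^+ 2 + 20 * N ^+ 3]`_k.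

Definition alt_binom_cert (n : nat) : {poly rat} :=
  \sum_(k < 6) (alt_binom_cert_coef k n)%:P * 'X^k.

Lemma alt_binom_certP n :
  (1 + 'X) ^+ 2 * \sum_(i < 4) (walk_rec_coef i n)%:P * 'X^(3 - i) * ((1 + 'X) ^+ 2) ^+ i =
  n%:R * 'X * ((1 + 'X) ^+ 2)^`() * (1 + 4 * 'X) * alt_binom_cert n
  + (1 + 'X) ^+ 2 * 'X * (2 * alt_binom_cert n + (1 + 4 * 'X) * (alt_binom_cert n)^`())
  - (n + 2)%:R * (1 + 'X) ^+ 2 * (1 + 4 * 'X) * alt_binom_cert n.
Proof.
have -> : ((1 + 'X) ^+ 2)^`() = 2 * (1 + 'X) :> {poly rat}.
  by rewrite deriv_exp derivD derivC derivX; ring.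
rewrite /alt_binom_cert !big_ord_recr !big_ord0 /=.
rewrite !(derivD, deriv_mulC, derivXn, derivX, derivC) /=.
by rewrite /alt_binom_cert_coef /walk_rec_coef /=; ring.
Qed.

Lemma coefM_eq0 {R : nzSemiRingType} (p q : {poly R}) (m : nat) :
  (forall j, (j <= m)%N -> q`_j = 0) -> (p * q)`_m = 0.
Proof. by move=> q_low; rewrite coefM big1 // => j _; rewrite q_low ?mulr0 // leq_subr. Qed.

Lemma alt_binom_sum_rec n : (0 < n)%N -> rec_lhs 3 walk_rec_coef alt_binom_sum n = 0.
Proof.
move=> n_gt0; set f := invsqrt_trunc (n + 5); set C := alt_binom_cert n.
set phi : {poly rat} := (1 + 'X) ^+ 2; set ode_err := (1 + 4 * 'X) * f^`() + 2 * f.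
have cert : phi * (f * \sum_(i < 4) (walk_rec_coef i n)%:P * 'X^(3 - i) * phi ^+ i
                   + 'X * C * ode_err) =
    n%:R * 'X * phi^`() * ((1 + 4 * 'X) * C * f)
    + phi * ('X * ((1 + 4 * 'X) * C * f)^`() - (n + 2)%:R * ((1 + 4 * 'X) * C * f)).
  rewrite mulrDr mulrCA alt_binom_certP /ode_err !derivM.
  rewrite (_ : (1 + 4 * 'X)^`() = 4); last first.
    by rewrite derivD derivC mulr_natl derivMn derivX add0r.
  by rewrite /phi /C; clear ode_err; ring.
have := coef_pow_telescope n_gt0 cert.
rewrite mulrDr coefD [X in _ + X]coefM_eq0 ?addr0 => [<-|j le_jn]; last first.
  by rewrite coefM_eq0 // => i le_ij; apply: coef_invsqrt_trunc_ode; lia.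
rewrite !mulr_sumr coef_sum /rec_lhs; apply: eq_bigr => i _.
have -> : phi ^+ n * (f * ((walk_rec_coef i n)%:P * 'X^(3 - i) * phi ^+ i)) =
          (walk_rec_coef i n)%:P * ('X^(3 - i) * (phi ^+ (n + i) * f)).
  by rewrite exprD; move: (phi ^+ n) (phi ^+ i) ('X^(3 - i)) => ? ? ?; ring.
have lt_i4 := ltn_ord i.
rewrite coefCM coefXnM ifN; last lia.
rewrite (alt_binom_sum_coef (n + i) (n + 5)); try lia.
by rewrite (_ : (n + 2 - (3 - i) = (n + i).-1)%N) //; lia.
Qed.

Lemma walk_rec_coef3_neq0 n : walk_rec_coef 3 n != 0.
Proof.
have -> : walk_rec_coef 3 n = (4 * (n + 2) * (2 * n + 5) * (2 * n + 7) * (5 * n + 8))%:R.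
  by rewrite /walk_rec_coef /=; ring.
by rewrite pnatr_eq0; lia.
Qed.

Lemma free_walks_alt_binom_sum n : (0 < n)%N -> free_walks n = alt_binom_sum n.
Proof.
move: n; apply: (rec_lhs_uniq 3 walk_rec_coef).
- by move=> n _; apply: walk_rec_coef3_neq0.
- exact: free_walks_rec.
- exact: alt_binom_sum_rec.
- case=> [|[|[|[|k]]]] //= _.
  all: rewrite free_walks_binom_prod_sum /binom_prod_sum /alt_binom_sum.
  all: by rewrite unlock; vm_compute.
Qed.

Theorem proposition3p5 (n : nat) (hn : (1 <= n)%N) :
  (#|bwalks_to1 n|%:R : rat) =
    n%:R^-1 * \sum_(1 <= k < n.+1)
       (-1) ^+ k.+1 * ('C(2 * k - 2, k - 1))%:R * ('C(2 * n, n - k))%:R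
  /\
  (#|bwalks_to1 n|%:R : rat) =
    n%:R^-1 * \sum_(0 <= i < n.+1)
       ('C(n, i))%:R * (binz n (2 * n%:Z + 1 - 3 * i%:Z))%:R.
Proof.
have card_eq : #|bwalks_to1 n|%:R = n%:R^-1 * free_walks n.
  rewrite -card_height1 -(card_bwalks_to1 hn) natrM [X in _ * X]mulrC mulKf //.
  by rewrite pnatr_eq0 -lt0n.
split; rewrite card_eq.
- by rewrite free_walks_alt_binom_sum.
- by rewrite free_walks_binom_prod_sum.
Qed.
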